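(* Let $G=(V,E)$ be a tree, $k\ge1$, and $f:E\to\{0,\dots,k\}$ an arbitrary labeling. Choose any orientation of $G$ as a rooted out-tree. Then $f$ is a valid labeling if and only if (1) for every $u\in V$, if $e=(u',u)\in E$ is the edge entering $u$, then $f(e)\notin S(u)$ or $f(e)=0$; and (2) for every $u\in V$ and distinct edges $e,e'\in\delta^+(u)$, the sets $L(e)$ and $L(e')$ are disjoint except possibly for the label $0$, i.e. $L(e)\cap L(e')\subseteq\{0\}$.
   Context: A valid labeling is a function $f:E\to\{0,\dots,k\}$ such that for every pair of distinct edges $e_1,e_2$ with $f(e_1)=f(e_2)>0$ there is an edge $e_3$ on the simple path between $e_1$ and $e_2$ with $f(e_3)>f(e_1)$. In a rooted out-tree, an edge from $u$ to $v$ is written $(u,v)$ and $\delta^+(u)$ is the set of edges leaving $u$. For edges $e,e'$, $e'$ is visible from $e$ if $e'$ lies on a directed path starting with $e$ and ending with $e'$ and no edge $e''$ on this path has $f(e'')>f(e')$. $L(e)$ (visibility sequence of $e$) is the set of labels $f(e')$ of edges $e'$ visible from $e$ (listed in ascending order). For a vertex $u$, $S(u)=\bigcup_{e\in\delta^+(u)}L(e)$. *)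

From mathcomp Require Import all_boot.
Set Implicit Arguments. Unset Strict Implicit. Unset Printing Implicit Defensive.

Section TreeDefs.
Variables (T : finType) (adj : rel T).

Definition simple_path (x : T) (s : seq T) : bool :=
  path adj x s && uniq (x :: s).

Definition is_tree : Prop :=
  symmetric adj /\ irreflexive adj /\
  (forall x y : T, connect adj x y) /\
  (forall (x : T) (s1 s2 : seq T),
      simple_path x s1 -> simple_path x s2 -> last x s1 = last x s2 -> s1 = s2).

Definition edgeset : {set {set T}} :=
  [set e | [exists x, exists y, adj x y && (e == [set x; y])]].

Definition edges_of (x : T) (s : seq T) : seq {set T} :=
  map (fun p => [set p.1; p.2]) (zip (x :: s) s).

Definition valid_labeling (f : {set T} -> nat) : Prop :=
  forall e1 e2, e1 \in edgeset -> e2 \in edgeset -> e1 != e2 ->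
    f e1 = f e2 -> 0 < f e1 ->
    exists (x : T) (s : seq T),
      [/\ simple_path x s,
          head set0 (edges_of x s) = e1,
          last set0 (edges_of x s) = e2 &
          exists2 e3, e3 \in edges_of x s & f e1 < f e3].

Variable r : T.

(* Orientation as a rooted out-tree with root r: the edge {u,v} is directed
   (u,v) iff u precedes v on the simple path from r to v. *)
Definition down (u v : T) : Prop :=
  adj u v /\ exists p : seq T,
    simple_path r (rcons p v) /\ last r p = u.

Fixpoint dpath (x : T) (s : seq T) : Prop :=
  match s with
  | [::] => True
  | y :: s' => down x y /\ dpath y s'
  end.

Definition out_edge (u : T) (e : {set T}) : Prop :=
  exists v, down u v /\ e = [set u; v].

Variable f : {set T} -> nat.

Definition visible (e e' : {set T}) : Prop :=
  exists (x : T) (s : seq T),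
    [/\ dpath x s, s <> [::],
        head set0 (edges_of x s) = e,
        last set0 (edges_of x s) = e' &
        forall e'', e'' \in edges_of x s -> f e'' <= f e'].

(* L(e), the visibility sequence (as a set of labels). *)
Definition Lvis (e : {set T}) (l : nat) : Prop :=
  exists e', visible e e' /\ f e' = l.

Definition Svis (u : T) (l : nat) : Prop :=
  exists e, out_edge u e /\ Lvis e l.

End TreeDefs.

From mathcomp Require Import all_boot zify.
Set Implicit Arguments. Unset Strict Implicit. Unset Printing Implicit Defensive.

(* Orient the tree away from [r]: every vertex [v] has a unique simple root
   path, and [down u v] says that it extends the root path of [u] by [v].  In a
   tree the simple path joining two distinct edges is unique, so a labeling is
   valid iff, for any two edges with the same positive label l, the path joining
   them carries a label larger than l.  If both edges lie on one root path, the
   joining path is directed, and carrying no label above l means the lower edge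
   is visible from the out-edge just below the upper one, against (1).
   Otherwise it climbs from one edge to the vertex w where their root paths
   branch and descends to the other; carrying no label above l then means both
   edges are visible from distinct out-edges of w, against (2).  Conversely a
   violation of (1) or (2) yields a path of one of these two shapes with no
   label above l. *)

Lemma head_rev (U : Type) (d : U) s : head d (rev s) = last d s.
Proof. by case/lastP: s => // s z; rewrite rev_rcons last_rcons. Qed.

Lemma last_rev (U : Type) (d : U) s : last d (rev s) = head d s.
Proof. by case: s => // z s; rewrite rev_cons last_rcons. Qed.

Lemma head_rev_cat (U : Type) (d a : U) s t : head d (rev (a :: s) ++ t) = last a s.
Proof.
by rewrite rev_cons -cats1 -catA; case/lastP: s => [|s b]; rewrite ?rev_rcons ?last_rcons.
Qed.

Lemma last_rev_belast (U : Type) (x : U) s : last (last x s) (rev (belast x s)) = x.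
Proof. by case: s => //= y s; rewrite rev_cons last_rcons. Qed.

Lemma seq_common_prefix (U : eqType) (s t : seq U) :
  exists C d1 d2, [/\ s = C ++ d1, t = C ++ d2 &
    forall a b s' t', d1 = a :: s' -> d2 = b :: t' -> a != b].
Proof.
elim: s t => [|x s IH] [|y t].
- by exists [::], [::], [::].
- by exists [::], [::], (y :: t).
- by exists [::], (x :: s), [::].
have [<-|neq_xy] := eqVneq x y; last first.
  by exists [::], (x :: s), (y :: t); split => // a b s' t' [<- _] [<- _].
have [C [d1 [d2 [-> -> heads_neq]]]] := IH t.
by exists (x :: C), d1, d2.
Qed.

Section Edges.
Variables (T : finType) (adj : rel T).

Lemma eq_set2 (x y a b : T) :
  [set x; y] = [set a; b] -> (x = a /\ y = b) \/ (x = b /\ y = a).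
Proof.
move=> eq_xy; have [a_in b_in] : a \in [set x; y] /\ b \in [set x; y].
  by rewrite eq_xy set21 set22.
have /set2P[] : x \in [set a; b] by rewrite -eq_xy set21.
all: have /set2P[] : y \in [set a; b] by rewrite -eq_xy set22.
all: move=> eq_y eq_x; subst; try by [left | right].
all: by [case/set2P: a_in => ->; left | case/set2P: b_in => ->; left].
Qed.

Lemma edges_of_cons (x y : T) s : edges_of x (y :: s) = [set x; y] :: edges_of y s.
Proof. by []. Qed.

Lemma edges_of_cat (x : T) p q :
  edges_of x (p ++ q) = edges_of x p ++ edges_of (last x p) q.
Proof. by elim: p x => [//|y p IH x]; rewrite cat_cons !edges_of_cons IH. Qed.

Lemma edges_of_rcons (x : T) p y :
  edges_of x (rcons p y) = rcons (edges_of x p) [set last x p; y].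
Proof. by rewrite -cats1 edges_of_cat cats1. Qed.

Lemma edges_of_rev (x : T) s :
  edges_of (last x s) (rev (belast x s)) = rev (edges_of x s).
Proof.
elim: s x => [//|y s IH x].
by rewrite edges_of_cons /= rev_cons edges_of_rcons IH last_rev_belast rev_cons setUC.
Qed.

Lemma size_edges_of (x : T) s : size (edges_of x s) = size s.
Proof. by rewrite size_map size2_zip /= ?leqnSn. Qed.

Lemma mem_edges_of (x : T) s e z : e \in edges_of x s -> z \in e -> z \in x :: s.
Proof.
elim: s x => [//|y s IH x]; rewrite edges_of_cons in_cons => /predU1P[-> | /IH z_in_ys /z_in_ys].
  by case/set2P=> ->; rewrite !inE eqxx ?orbT.
by move=> z_in; rewrite in_cons z_in orbT.
Qed.

Lemma uniq_edges_of (x : T) s : uniq (x :: s) -> uniq (edges_of x s).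
Proof.
elim: s x => [//|y s IH x] /andP[x_notin uniq_ys].
rewrite edges_of_cons /= IH // andbT; apply: contra x_notin => /mem_edges_of; apply; exact: set21.
Qed.

Lemma edgeset_edges_of (x : T) s e :
  path adj x s -> e \in edges_of x s -> e \in edgeset adj.
Proof.
elim: s x => [//|y s IH x] /andP[adj_xy path_ys].
rewrite edges_of_cons in_cons => /predU1P[-> | /IH]; last exact.
by rewrite inE; apply/existsP; exists x; apply/existsP; exists y; rewrite adj_xy eqxx.
Qed.

Lemma simple_path_cat (x : T) p q : simple_path adj x (p ++ q) ->
  simple_path adj x p /\ simple_path adj (last x p) q.
Proof.
rewrite /simple_path cat_path -cat_cons cat_uniq.
case/andP=> /andP[path_p path_q] /and3P[uniq_p disj uniq_q].
split; first by rewrite path_p uniq_p.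
rewrite path_q /= uniq_q andbT; apply: contra disj => last_in_q.
by apply/hasP; exists (last x p); last exact: mem_last.
Qed.

Lemma simple_path_rev (x : T) s : symmetric adj -> simple_path adj x s ->
  simple_path adj (last x s) (rev (belast x s)).
Proof.
move=> adj_sym /andP[path_s uniq_s]; rewrite /simple_path rev_path.
rewrite (eq_path (e' := adj)) => [|a b]; last by rewrite /= adj_sym.
by rewrite path_s -rev_rcons -lastI rev_uniq.
Qed.

Lemma simple_path_end_edges_neq (x : T) s : simple_path adj x s -> 1 < size s ->
  head set0 (edges_of x s) != last set0 (edges_of x s).
Proof.
case: s => [|y [|z s]] // /andP[_ uniq_s] _.
have /andP[first_notin _] := uniq_edges_of uniq_s.
rewrite !edges_of_cons [head _ _]/=; apply: contraNneq first_notin => ->.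
exact: (mem_last [set y; z] (edges_of z s)).
Qed.

Variable f : {set T} -> nat.

Definition larger_between (e1 e2 : {set T}) : Prop :=
  exists (x : T) (s : seq T),
    [/\ simple_path adj x s,
        head set0 (edges_of x s) = e1,
        last set0 (edges_of x s) = e2 &
        exists2 e3, e3 \in edges_of x s & f e1 < f e3].

Lemma larger_between_sym e1 e2 : symmetric adj -> f e1 = f e2 ->
  larger_between e1 e2 -> larger_between e2 e1.
Proof.
move=> adj_sym f_e12 [x [s [simple_s head_s last_s [e3 e3_in f_e3]]]].
exists (last x s), (rev (belast x s)); rewrite edges_of_rev head_rev last_rev.
split => //; first exact: simple_path_rev.
by exists e3; rewrite ?mem_rev // -f_e12.
Qed.

Lemma larger_between_of_path x s e1 e2 : simple_path adj x s ->
  head set0 (edges_of x s) = e1 -> last set0 (edges_of x s) = e2 ->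
  ~ (forall e, e \in edges_of x s -> f e <= f e1) -> larger_between e1 e2.
Proof.
move=> simple_s head_s last_s not_all_le.
have [/hasP[e3 e3_in f_e3] | /hasPn all_le] := boolP (has (fun e => f e1 < f e) (edges_of x s)).
  by exists x, s; split => //; exists e3.
by case: not_all_le => e /all_le; rewrite -leqNgt.
Qed.

End Edges.

Section RootedTree.
Variables (T : finType) (adj : rel T) (r : T).
Hypothesis tree : is_tree adj.

Let adj_sym : symmetric adj. Proof. by case: tree. Qed.
Let adj_irr : irreflexive adj. Proof. by case: tree => _ []. Qed.
Let tree_connected : forall x y, connect adj x y. Proof. by case: tree => _ [_ []]. Qed.
Let simple_path_inj : forall (x : T) (s1 s2 : seq T),
  simple_path adj x s1 -> simple_path adj x s2 -> last x s1 = last x s2 -> s1 = s2.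
Proof. by case: tree => _ [_ []]. Qed.

Lemma exists_root_path v : exists s, simple_path adj r s && (last r s == v).
Proof.
have /connectP[p path_p ->] := tree_connected r v.
case: (shortenP path_p) => p' path_p' uniq_p' _.
by exists p'; rewrite /simple_path path_p' uniq_p' eqxx.
Qed.

Definition root_path v := xchoose (exists_root_path v).

Lemma root_path_simple v : simple_path adj r (root_path v).
Proof. by have /andP[] := xchooseP (exists_root_path v). Qed.

Lemma last_root_path v : last r (root_path v) = v.
Proof. by have /andP[_ /eqP] := xchooseP (exists_root_path v). Qed.

Lemma root_path_last p : simple_path adj r p -> root_path (last r p) = p.
Proof.
by move=> simple_p; apply: simple_path_inj (root_path_simple _) simple_p _; exact: last_root_path.
Qed.

Lemma root_path_root : root_path r = [::].
Proof. exact: (@root_path_last [::]). Qed.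

Lemma root_path_inj : injective root_path.
Proof. by move=> u v eq_uv; rewrite -(last_root_path u) eq_uv last_root_path. Qed.

Lemma downE u v : down adj r u v <-> root_path v = rcons (root_path u) v.
Proof.
split=> [[adj_uv [p [simple_pv <-]]] | root_v].
  have := simple_pv; rewrite -cats1 => /simple_path_cat[simple_p _].
  by rewrite (root_path_last simple_p) -(root_path_last simple_pv) last_rcons.
split; last by exists (root_path u); rewrite -root_v root_path_simple last_root_path.
have /andP[] := root_path_simple v; rewrite root_v rcons_path => /andP[_].
by rewrite last_root_path.
Qed.

Lemma dpathE x s : dpath adj r x s <-> simple_path adj r (root_path x ++ s).
Proof.
elim: s x => [|y s IH] x /=; first by rewrite cats0; split=> // _; apply: root_path_simple.
rewrite -cat_rcons; split=> [[/downE <- /IH] // | simple_xys].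
have [simple_xy _] := simple_path_cat simple_xys.
have root_y : root_path y = rcons (root_path x) y.
  by rewrite -(root_path_last simple_xy) last_rcons.
by split; [apply/downE | apply/IH; rewrite root_y].
Qed.

Lemma dpath_simple x s : dpath adj r x s -> simple_path adj x s.
Proof. by move/dpathE/simple_path_cat => [_]; rewrite last_root_path. Qed.

Lemma down_asym u v : down adj r u v -> ~ down adj r v u.
Proof.
by move=> /downE root_v /downE /(congr1 size); rewrite root_v !size_rcons; lia.
Qed.

Lemma down_parent_eq u u' v : down adj r u v -> down adj r u' v -> u = u'.
Proof. by move=> /downE root_v /downE; rewrite root_v => /rcons_inj[/root_path_inj]. Qed.

Lemma root_path_prefix w u : w \in r :: root_path u ->
  exists q, root_path u = root_path w ++ q.
Proof.
rewrite in_cons => /predU1P[-> | w_in]; first by exists (root_path u); rewrite root_path_root.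
case/splitPr: w_in (root_path_simple u) => p1 p2.
rewrite -cat_rcons => /simple_path_cat[simple_p1 _].
by exists p2; rewrite -(root_path_last simple_p1) last_rcons.
Qed.

Lemma adj_down u v : adj u v -> down adj r u v \/ down adj r v u.
Proof.
have down_of_notin a b : adj a b -> b \notin r :: root_path a -> down adj r a b.
  move=> adj_ab b_notin; apply/downE; rewrite -{1}(last_rcons r (root_path a) b).
  apply: root_path_last; have /andP[path_a uniq_a] := root_path_simple a.
  rewrite /simple_path rcons_path path_a last_root_path adj_ab.
  by rewrite -rcons_cons rcons_uniq b_notin uniq_a.
move=> adj_uv.
have [v_in | ] := boolP (v \in r :: root_path u); last by left; apply: down_of_notin.
have [u_in | ] := boolP (u \in r :: root_path v); last first.
  by right; apply: down_of_notin; rewrite // adj_sym.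
have [[q1 root_u] [q2 root_v]] := (root_path_prefix v_in, root_path_prefix u_in).
have q2_nil : q2 = [::].
  by apply/nilP; have := congr1 size root_u; rewrite root_v !size_cat /nilp; lia.
move: root_v; rewrite q2_nil cats0 => /root_path_inj eq_vu.
by move: adj_uv; rewrite eq_vu adj_irr.
Qed.

Lemma edgeset_down e : e \in edgeset adj -> exists a b, down adj r a b /\ e = [set a; b].
Proof.
rewrite inE => /existsP[x /existsP[y /andP[adj_xy /eqP ->]]].
by case: (adj_down adj_xy) => down_xy; [exists x, y | exists y, x; rewrite setUC].
Qed.

Lemma root_path_dpath w c s z : dpath adj r w (c :: s) -> z \in c :: s ->
  exists q, root_path z = root_path w ++ c :: q.
Proof.
move=> /dpathE simple_wcs z_in.
have [p1 [p2 eq_cs]] : exists p1 p2, c :: s = p1 ++ z :: p2.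
  by case/splitPr: z_in => p1 p2; exists p1, p2.
move: simple_wcs; rewrite eq_cs -cat_rcons catA => /simple_path_cat[/root_path_last].
rewrite last_cat last_rcons => -> _.
by case: p1 eq_cs => [|a p1] [<- _]; [exists [::] | exists (rcons p1 z)].
Qed.

Lemma simple_path_join w c1 B1 c2 B2 :
  dpath adj r w (c1 :: B1) -> dpath adj r w (c2 :: B2) -> c1 != c2 ->
  exists x t, simple_path adj x t /\
    edges_of x t = rev (edges_of w (c1 :: B1)) ++ edges_of w (c2 :: B2).
Proof.
move=> dpath1 dpath2 neq_c.
exists (last w (c1 :: B1)), (rev (belast w (c1 :: B1)) ++ c2 :: B2).
split; last by rewrite edges_of_cat edges_of_rev last_rev_belast.
have /andP[path1 uniq1] := simple_path_rev adj_sym (dpath_simple dpath1).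
have /andP[path2] := dpath_simple dpath2; rewrite cons_uniq => /andP[w_notin uniq2].
apply/andP; split; first by rewrite cat_path path1 last_rev_belast path2.
have vertices1 : last w (c1 :: B1) :: rev (belast w (c1 :: B1)) =i w :: c1 :: B1.
  by move=> z; rewrite -rev_rcons -lastI mem_rev.
rewrite -cat_cons cat_uniq uniq1 uniq2 andbT; apply/hasPn => z z_in2.
rewrite vertices1 in_cons; apply/negP => /predU1P[eq_zw | z_in1].
  by move: w_notin; rewrite -eq_zw z_in2.
have [[q1 root1] [q2 root2]] := (root_path_dpath dpath1 z_in1, root_path_dpath dpath2 z_in2).
have := congr1 (drop (size (root_path w))) (etrans (esym root1) root2).
by rewrite !drop_size_cat // => -[eq_c _]; rewrite eq_c eqxx in neq_c.
Qed.

Lemma last_edge_root_path a b : down adj r a b ->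
  last set0 (edges_of r (root_path b)) = [set a; b].
Proof. by move/downE => ->; rewrite edges_of_rcons last_rcons last_root_path. Qed.

Lemma simple_path_by_end_edges x s y t :
  simple_path adj x s -> simple_path adj y t ->
  head set0 (edges_of y t) = head set0 (edges_of x s) ->
  last set0 (edges_of y t) = last set0 (edges_of x s) ->
  head set0 (edges_of x s) != last set0 (edges_of x s) -> y = x /\ t = s.
Proof.
have ends (a b : T) p c :
    head set0 (edges_of a (b :: rcons p c)) = [set a; b] /\
    last set0 (edges_of a (b :: rcons p c)) = [set last b p; c].
  by rewrite edges_of_cons edges_of_rcons -rcons_cons last_rcons.
case: s => [|x1 s]; first by rewrite eqxx.
case/lastP: s => [|m z] simple_s; first by rewrite eqxx.
case: t => [|y1 t] simple_t.
  by move=> /= head_eq; have := set21 x x1; rewrite -head_eq inE.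
case/lastP: t simple_t => [|n w] simple_t; first by move=> <- <- /=; rewrite eqxx.
have [head_s last_s] := ends x x1 m z; have [head_t last_t] := ends y y1 n w.
rewrite head_s last_s head_t last_t => /eq_set2 heads /eq_set2 lasts _.
have /simple_path_cat[simple_pre _] : simple_path adj x ((x1 :: m) ++ [:: z]).
  by rewrite cat_cons cats1.
have [_ simple_suf] := simple_path_cat (p := [:: x1]) simple_s.
have /simple_path_cat[simple_mid _] : simple_path adj x1 (m ++ [:: z]) by rewrite cats1.
have /andP[_ uniq_s] := simple_s.
have x_notin : x \notin x1 :: rcons m z by case/andP: uniq_s.
have z_notin : z \notin x1 :: m.
  by move: uniq_s; rewrite -!rcons_cons rcons_uniq in_cons negb_or => /andP[/andP[]].
(* If the end vertices match up, both paths are the simple path from [x] to [z];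
   otherwise [t] is a subpath of [s] that would have to visit [x] or [z] again. *)
case: heads lasts => -[? ?] [[last_n ?] | [last_n ?]]; subst y y1 w.
- by split=> //; apply: simple_path_inj simple_t simple_s _; rewrite /= !last_rcons.
- have [eq_pre] : x1 :: m = x1 :: rcons n (last x1 m).
    by apply: simple_path_inj simple_pre simple_t _; rewrite /= last_rcons.
  by move: z_notin; rewrite -last_n eq_pre -rcons_cons mem_rcons in_cons mem_last orbT.
- have eq_suf : rcons m z = x :: rcons n z.
    by apply: simple_path_inj simple_suf simple_t _; rewrite /= !last_rcons.
  by move: x_notin; rewrite in_cons eq_suf mem_head orbT.
- have eq_mid : m = x :: rcons n (last x1 m).
    by apply: simple_path_inj simple_mid simple_t _; rewrite /= last_rcons.
  have x_in : x \in m by rewrite eq_mid mem_head.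
  by move: x_notin; rewrite in_cons mem_rcons in_cons x_in !orbT.
Qed.

Variable f : {set T} -> nat.

Lemma visibleP u v e' : down adj r u v ->
  visible adj r f [set u; v] e' <->
  exists s, [/\ dpath adj r u (v :: s), last set0 (edges_of u (v :: s)) = e' &
              forall e, e \in edges_of u (v :: s) -> f e <= f e'].
Proof.
move=> down_uv; split=> [[x [[|y s] [//= [down_xy dpath_ys] _]]] | [s [dpath_s last_s all_le]]].
  move=> /eq_set2[[? ?] | [? ?]] last_s all_le; subst; first by exists s.
  by case: (down_asym down_uv down_xy).
by exists u, (v :: s).
Qed.

Lemma valid_larger_on_path x s e1 e2 : valid_labeling adj f ->
  simple_path adj x s -> 1 < size s ->
  head set0 (edges_of x s) = e1 -> last set0 (edges_of x s) = e2 ->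
  f e1 = f e2 -> 0 < f e1 -> exists2 e3, e3 \in edges_of x s & f e1 < f e3.
Proof.
move=> valid simple_s size_s head_s last_s f_e12 pos.
have ends_neq := simple_path_end_edges_neq simple_s size_s.
have [e1_in e2_in] : e1 \in edgeset adj /\ e2 \in edgeset adj.
  case: s simple_s size_s head_s last_s {ends_neq} => [//|y s] /andP[path_s _] _ <- <-.
  by split; apply: (edgeset_edges_of path_s); [exact: mem_head | exact: (mem_last [set x; y])].
have e12_neq : e1 != e2 by rewrite -head_s -last_s.
have [x' [s' [simple_s' head_s' last_s' [e3 e3_in lt_e3]]]] :=
  valid _ _ e1_in e2_in e12_neq f_e12 pos.
have [? ?] := simple_path_by_end_edges simple_s simple_s'
  (etrans head_s' (esym head_s)) (etrans last_s' (esym last_s)) ends_neq.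
by subst; exists e3.
Qed.

Definition entering_label_unseen : Prop :=
  forall u u' : T, down adj r u' u ->
    ~ Svis adj r f u (f [set u'; u]) \/ f [set u'; u] = 0.

Definition out_visibility_disjoint : Prop :=
  forall (u : T) (e e' : {set T}),
    out_edge adj r u e -> out_edge adj r u e' -> e <> e' ->
    forall l, Lvis adj r f e l -> Lvis adj r f e' l -> l = 0.

Lemma valid_entering_label_unseen : valid_labeling adj f -> entering_label_unseen.
Proof.
move=> valid u u' down_u'u; have [->|pos] := posnP (f [set u'; u]); [by right | left].
move=> [_ [[v [down_uv ->]] [e' [/(visibleP _ down_uv)[s [dpath_s last_s all_le]] f_e']]]].
have dpath_u's : dpath adj r u' [:: u, v & s] by split.
have [e3 e3_in lt_e3] :=
  valid_larger_on_path valid (dpath_simple dpath_u's) isT erefl last_s (esym f_e') pos.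
move: e3_in lt_e3; rewrite edges_of_cons in_cons => /predU1P[-> | /all_le]; first by rewrite ltnn.
by rewrite f_e' leqNgt => /negP.
Qed.

Lemma valid_out_visibility_disjoint : valid_labeling adj f -> out_visibility_disjoint.
Proof.
move=> valid u _ _ [v [down_uv ->]] [v' [down_uv' ->]] neq_e l [g [vis_g f_g]] [g' [vis_g' f_g']].
have [//|pos] := posnP l; exfalso; subst l.
move/(visibleP _ down_uv): vis_g => [s [dpath_s last_s all_le]].
move/(visibleP _ down_uv'): vis_g' => [s' [dpath_s' last_s' all_le']].
have neq_v : v != v' by apply: contra_not_neq neq_e => ->.
have [x [t [simple_t edges_t]]] := simple_path_join dpath_s dpath_s' neq_v.
have size_t : 1 < size t.
  by rewrite -(size_edges_of x) edges_t size_cat size_rev !edges_of_cons /= addnS.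
have head_t : head set0 (edges_of x t) = g by rewrite edges_t edges_of_cons head_rev_cat.
have last_t : last set0 (edges_of x t) = g' by rewrite edges_t last_cat -last_s'.
have [e3] := valid_larger_on_path valid simple_t size_t head_t last_t (esym f_g') pos.
by rewrite edges_t mem_cat mem_rev => /orP[/all_le | /all_le']; rewrite ?f_g' leqNgt => /negP.
Qed.

Lemma larger_between_descendant a1 b1 a2 b2 c d : entering_label_unseen ->
  down adj r a1 b1 -> down adj r a2 b2 -> root_path b2 = root_path b1 ++ c :: d ->
  f [set a1; b1] = f [set a2; b2] -> 0 < f [set a1; b1] ->
  larger_between adj f [set a1; b1] [set a2; b2].
Proof.
move=> unseen down1 down2 root2 f_eq pos.
have dpath_b1 : dpath adj r b1 (c :: d) by apply/dpathE; rewrite -root2 root_path_simple.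
have last_b1 : last set0 (edges_of b1 (c :: d)) = [set a2; b2].
  by rewrite -(last_edge_root_path down2) root2 edges_of_cat last_cat last_root_path.
have dpath_a1 : dpath adj r a1 [:: b1, c & d] by split.
apply: (larger_between_of_path (dpath_simple dpath_a1) erefl last_b1) => all_le.
have [] := unseen b1 a1 down1; last by move=> f_0; rewrite f_0 in pos.
apply; exists [set b1; c]; split; first by exists c; case: dpath_b1.
exists [set a2; b2]; split=> //; apply/(visibleP _ (proj1 dpath_b1)).
exists d; split=> // e e_in; rewrite -f_eq; apply: all_le.
by rewrite edges_of_cons in_cons e_in orbT.
Qed.

Lemma larger_between_branching a1 b1 a2 b2 C c1 B1 c2 B2 : out_visibility_disjoint ->
  down adj r a1 b1 -> down adj r a2 b2 ->
  root_path b1 = C ++ c1 :: B1 -> root_path b2 = C ++ c2 :: B2 -> c1 != c2 ->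
  f [set a1; b1] = f [set a2; b2] -> 0 < f [set a1; b1] ->
  larger_between adj f [set a1; b1] [set a2; b2].
Proof.
move=> disjoint down1 down2 root1 root2 neq_c f_eq pos.
set w := last r C.
have root_w : root_path w = C.
  by move: (root_path_simple b1); rewrite root1 => /simple_path_cat[/root_path_last].
have dpath1 : dpath adj r w (c1 :: B1) by apply/dpathE; rewrite root_w -root1 root_path_simple.
have dpath2 : dpath adj r w (c2 :: B2) by apply/dpathE; rewrite root_w -root2 root_path_simple.
have last1 : last set0 (edges_of w (c1 :: B1)) = [set a1; b1].
  by rewrite -(last_edge_root_path down1) root1 edges_of_cat last_cat.
have last2 : last set0 (edges_of w (c2 :: B2)) = [set a2; b2].
  by rewrite -(last_edge_root_path down2) root2 edges_of_cat last_cat.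
have [x [t [simple_t edges_t]]] := simple_path_join dpath1 dpath2 neq_c.
have head_t : head set0 (edges_of x t) = [set a1; b1].
  by rewrite edges_t edges_of_cons head_rev_cat.
have last_t : last set0 (edges_of x t) = [set a2; b2] by rewrite edges_t last_cat -last2.
apply: (larger_between_of_path simple_t head_t last_t) => all_le.
have out1 : out_edge adj r w [set w; c1] by exists c1; case: dpath1.
have out2 : out_edge adj r w [set w; c2] by exists c2; case: dpath2.
have neq_e : [set w; c1] <> [set w; c2].
  by case/eq_set2 => -[eq1 eq2]; move: neq_c; rewrite eq2 ?eq1 eqxx.
suff f_0 : f [set a1; b1] = 0 by rewrite f_0 in pos.
apply: (disjoint w _ _ out1 out2 neq_e).
- exists [set a1; b1]; split=> //; apply/(visibleP _ (proj1 dpath1)).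
  exists B1; split=> // e e_in; apply: all_le.
  by rewrite edges_t mem_cat mem_rev e_in.
- exists [set a2; b2]; split=> //; apply/(visibleP _ (proj1 dpath2)).
  exists B2; split=> // e e_in; rewrite -f_eq; apply: all_le.
  by rewrite edges_t mem_cat e_in orbT.
Qed.

Lemma valid_of_conditions :
  entering_label_unseen -> out_visibility_disjoint -> valid_labeling adj f.
Proof.
move=> unseen disjoint _ _ /edgeset_down[a1 [b1 [down1 ->]]] /edgeset_down[a2 [b2 [down2 ->]]].
move=> neq_e f_eq pos.
have [C [d1 [d2 [root1 root2 heads_neq]]]] := seq_common_prefix (root_path b1) (root_path b2).
case: d1 d2 root1 root2 heads_neq => [|c1 B1] [|c2 B2] root1 root2 heads_neq.
- have eq_b : b1 = b2 by apply: root_path_inj; rewrite root1 root2.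
  by subst b2; rewrite (down_parent_eq down1 down2) eqxx in neq_e.
- by apply: (larger_between_descendant unseen down1 down2); rewrite ?root2 ?root1 ?cats0.
- apply: (larger_between_sym adj_sym (esym f_eq)).
  by apply: (larger_between_descendant unseen down2 down1); rewrite -?f_eq ?root2 ?root1 ?cats0.
- exact: larger_between_branching root1 root2 (heads_neq _ _ _ _ erefl erefl) f_eq pos.
Qed.

End RootedTree.

Unset Implicit Arguments.

Theorem proposition4p2 (T : finType) (adj : rel T) (k : nat)
    (f : {set T} -> nat) (r : T) :
  is_tree adj -> 1 <= k ->
  (forall e, e \in edgeset adj -> f e <= k) ->
  (valid_labeling adj f <->
   ((forall u u' : T, down adj r u' u ->
       ~ Svis adj r f u (f [set u'; u]) \/ f [set u'; u] = 0) /\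
    (forall (u : T) (e e' : {set T}),
       out_edge adj r u e -> out_edge adj r u e' -> e <> e' ->
       forall l, Lvis adj r f e l -> Lvis adj r f e' l -> l = 0))).
Proof.
move=> tree _ _; split=> [valid | [unseen disjoint]].
  by split; [exact: valid_entering_label_unseen | exact: valid_out_visibility_disjoint].
exact: valid_of_conditions unseen disjoint.
Qed.
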